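(* Let $q\geq2$ and $0<\alpha<1/q$. A randomized Anti-$q$-SG algorithm which on every input of length $n$ incurs an expected cost of at most $\alpha n$ must read at least $$b\geq K_{1/q}(\alpha)\,n=(1-h_q(1-\alpha))\,n\log_2 q$$ bits of advice.
   Context: Anti-$q$-SG (anti-string guessing) is the repeated matrix game with the $q\times q$ identity cost matrix: inputs $(n,x_1,\dots,x_n)$ with $x_i\in[q]$; in round $i$ the algorithm knows $n,x_1,\dots,x_{i-1}$ and outputs $y_i\in[q]$, paying $1$ if $y_i=x_i$ and $0$ otherwise; $n$ is the length. Advice is read from an infinite tape prepared by an oracle knowing the input; a randomized algorithm with advice is a probability distribution over deterministic algorithms with advice. $K_y(x)=x\log_2(x/y)+(1-x)\log_2((1-x)/(1-y))$; $h_q(x)=x\log_q(q-1)-x\log_qx-(1-x)\log_q(1-x)$. *)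

From HB Require Import structures.
From mathcomp Require Import all_boot all_order all_algebra.
From mathcomp Require Import all_classical all_reals all_analysis.
Set Implicit Arguments. Unset Strict Implicit. Unset Printing Implicit Defensive.
Import Order.TTheory GRing.Theory Num.Theory.
Local Open Scope ring_scope.

Definition tape := nat -> bool.

(** A deterministic Anti-q-SG algorithm with advice: in round i (0-indexed)
    it knows n, the history x_1..x_i-1 (a seq of length i) and has access
    to the advice tape, and outputs y in [q] = 'I_q.  The oracle (which
    knows the whole input) prepares the tape. *)
Record detalg (q : nat) := DetAlg {
  alg_out : nat -> seq 'I_q -> tape -> 'I_q;
  alg_oracle : seq 'I_q -> tape }.

Definition out_round (q : nat) (D : detalg q) (x : seq 'I_q) (i : nat) : 'I_q :=
  alg_out D (size x) (take i x) (alg_oracle D x).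

Definition cost (q : nat) (D : detalg q) (x : seq 'I_q) : nat :=
  (\sum_(i < size x) (out_round D x i == tnth (in_tuple x) i))%N.

(** D reads at most b advice bits on input x: its behaviour on x only
    depends on the first b bits of the tape written by the oracle. *)
Definition reads_at_most (q : nat) (D : detalg q) (x : seq 'I_q) (b : nat) : Prop :=
  forall t : tape, (forall j, (j < b)%N -> t j = alg_oracle D x j) ->
  forall i, (i < size x)%N ->
    alg_out D (size x) (take i x) t = alg_out D (size x) (take i x) (alg_oracle D x).

Definition log2 {R : realType} (x : R) : R := ln x / ln 2.
Definition logb {R : realType} (a x : R) : R := ln x / ln a.

Definition KL {R : realType} (y x : R) : R :=
  x * log2 (x / y) + (1 - x) * log2 ((1 - x) / (1 - y)).

Definition hq {R : realType} (q : nat) (x : R) : R :=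
  x * logb q%:R (q%:R - 1) - x * logb q%:R x - (1 - x) * logb q%:R (1 - x).

From HB Require Import structures.
From mathcomp Require Import all_boot all_order all_algebra.
From mathcomp Require Import all_classical all_reals all_analysis.
From mathcomp Require Import ring lra measurable_realfun.
Set Implicit Arguments. Unset Strict Implicit. Unset Printing Implicit Defensive.
Import Order.TTheory GRing.Theory Num.Theory.
Local Open Scope ring_scope.

(* Fix the randomness w.  Once the b advice bits are fixed to a string p, the
   algorithm is a predictor f_p from histories to guesses, and for every
   predictor f, sum_(|x| = n) th^(hits f x) = (th + q - 1)^n, because in each
   round exactly one of the q continuations is hit.  The cost on x is the
   number of hits of f_p for the advice p written for x, hence
   sum_(|x| = n) th^(cost x) <= 2^b (th + q - 1)^n.  Since every input has
   expected cost at most alpha n, convexity of c |-> th^c (a tangent line at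
   alpha n, integrated against P) gives q^n th^(alpha n) <= 2^b (th + q - 1)^n.
   Taking th = alpha (q - 1) / (1 - alpha), which is < 1 because
   alpha < 1/q, and logarithms yields b >= K_(1/q)(alpha) n. *)

Section Words.
Variable T : finType.

Fixpoint words (n : nat) : seq (seq T) :=
  if n is n'.+1 then [seq a :: x | a <- enum T, x <- words n'] else [:: [::]].

Lemma mem_words n x : (x \in words n) = (size x == n).
Proof.
elim: n x => [|n IH] [|a x] //=; rewrite ?mem_seq1 //.
  by apply/allpairsP => -[p [_ _]].
apply/allpairsP/idP => [[[a' y] /= [_ y_n [_ ->]]] | x_n].
  by rewrite eqSS -IH.
by exists (a, x); rewrite mem_enum IH.
Qed.

Lemma size_words n : size (words n) = (#|T| ^ n)%N.
Proof. by elim: n => //= n IH; rewrite size_allpairs IH -cardE expnS. Qed.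

Fixpoint hits (f : seq T -> T) (x : seq T) : nat :=
  if x is a :: x' then ((f [::] == a) + hits (fun p => f (a :: p)) x')%N else 0%N.

Lemma hitsE (f : seq T -> T) x :
  hits f x = (\sum_(i < size x) (f (take i x) == tnth (in_tuple x) i))%N.
Proof.
elim: x f => [|a x IH] f /=; first by rewrite big_ord0.
rewrite big_ord_recl IH; congr (_ + _)%N; apply: eq_bigr => i _.
by rewrite !(tnth_nth a).
Qed.

Variable R : comPzSemiRingType.

Lemma sum_expr_eq (th : R) (c : T) :
  \sum_(a : T) th ^+ (c == a) = th + (#|T|.-1)%:R.
Proof.
rewrite (bigD1 c) //= eqxx expr1; congr (_ + _).
rewrite (eq_bigr (fun _ => 1)) => [|a]; last by rewrite eq_sym => /negbTE ->.
by rewrite sumr_const cardC1.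
Qed.

Lemma sum_expr_hits (th : R) n (f : seq T -> T) :
  \sum_(x <- words n) th ^+ hits f x = (th + (#|T|.-1)%:R) ^+ n.
Proof.
elim: n f => [|n IH] f /=; first by rewrite big_seq1.
rewrite big_allpairs_dep big_enum exprS -{1}(sum_expr_eq th (f [::])) big_distrl /=.
apply: eq_bigr => a _ /=; rewrite -(IH (fun p => f (a :: p))) big_distrr /=.
by apply: eq_bigr => x _; rewrite exprD.
Qed.

End Words.

Definition advised q (D : detalg q) n (p : seq bool) (pre : seq 'I_q) : 'I_q :=
  alg_out D n pre (nth false p).

Lemma cost_advised q (D : detalg q) x b : reads_at_most D x b ->
  cost D x = hits (advised D (size x) (mkseq (alg_oracle D x) b)) x.
Proof.
move=> readD; rewrite hitsE; apply: eq_bigr => i _.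
by rewrite /out_round /advised readD // => j j_lt_b; rewrite nth_mkseq.
Qed.

Lemma sum_expr_cost_le (R : numDomainType) q (D : detalg q) n b (th : R) :
  0 <= th -> (forall x, size x = n -> reads_at_most D x b) ->
  \sum_(x <- words 'I_q n) th ^+ cost D x <= (2 ^ b)%:R * (th + (q.-1)%:R) ^+ n.
Proof.
move=> th_ge0 readD.
pose guess p := advised D n p.
apply: (@le_trans _ _ (\sum_(x <- words _ n) \sum_(p <- words _ b) th ^+ hits (guess p) x)).
  rewrite big_seq [leRHS]big_seq; apply: ler_sum => x; rewrite mem_words => /eqP x_n.
  have p_x : mkseq (alg_oracle D x) b \in words bool b by rewrite mem_words size_mkseq.
  rewrite (big_rem _ p_x) /= (cost_advised (readD x x_n)) x_n lerDl.
  by apply: sumr_ge0 => p _; exact: exprn_ge0.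
rewrite exchange_big /= (eq_bigr _ (fun p _ => sum_expr_hits th n (guess p))).
by rewrite big_const_seq count_predT size_words card_bool card_ord iter_addr_0 mulr_natl.
Qed.

Lemma expR_tangent (R : realType) (l a c : R) :
  expR (l * a) * (1 + l * (c - a)) <= expR (l * c).
Proof.
have -> : l * c = l * a + l * (c - a) by ring.
by rewrite expRD ler_wpM2l ?expR_ge0 ?expR_ge1Dx.
Qed.

Lemma probability_integral_ge d (T : measurableType d) (R : realType)
    (P : probability T R) (f : T -> \bar R) (k : R) :
  measurable_fun setT f -> (forall w, 0 <= f w)%E -> (forall w, k%:E <= f w)%E ->
  (k%:E <= \int[P]_w f w)%E.
Proof.
move=> mf f_ge0 k_le_f; have [k_le0 | k_gt0] := leP k 0.
  by apply: le_trans (integral_ge0 _ _) => //; rewrite lee_fin.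
have <- : (\int[P]_w (cst k%:E w) = k%:E)%E.
  by rewrite integral_cst // -[RHS]mule1; congr (_ * _)%E; exact: probability_setT.
apply: ge0_le_integral => //; first by move=> w _; rewrite lee_fin ltW.
Qed.

Lemma size_mul_expR_le d (T : measurableType d) (R : realType)
    (P : probability T R) (I : eqType) (L : seq I) (c : T -> I -> nat) (th m M : R) :
  0 < th < 1 ->
  {in L, forall i, measurable_fun setT (fun w => (c w i)%:R : R)} ->
  {in L, forall i, (\int[P]_w ((c w i)%:R)%:E <= m%:E)%E} ->
  (forall w, \sum_(i <- L) th ^+ c w i <= M) ->
  (size L)%:R * expR (ln th * m) <= M.
Proof.
move=> /andP[th_gt0 th_lt1] mc Ec sumM.
set l := ln th; set N : R := (size L)%:R; set E0 := expR (l * m).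
have l_lt0 : l < 0 by apply: ln_lt0; rewrite th_gt0 th_lt1.
have E0_gt0 : 0 < E0 by exact: expR_gt0.
pose C w := \sum_(i <- L) ((c w i)%:R : R).
have tangent_sum w : E0 * (N + l * (C w - N * m)) <= M.
  apply: le_trans (sumM w).
  have -> : E0 * (N + l * (C w - N * m)) = \sum_(i <- L) E0 * (1 + l * ((c w i)%:R - m)).
    rewrite -big_distrr /= big_split /= -big_distrr /= sumrB /C.
    by rewrite !big_const_seq !count_predT !iter_addr_0 mulr_natl.
  apply: ler_sum => i _.
  by rewrite -[th]lnK ?posrE // -expRM_natl (mulrC _ (ln th)); exact: expR_tangent.
have C_ge w : N * m + (M / E0 - N) / l <= C w.
  have := tangent_sum w; rewrite -ler_pdivlMl // => le_w.
  rewrite -lerBrDl ler_ndivrMr //; rewrite mulrC in le_w; lra.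
(* Summands outside L are zeroed: ge0_integral_sum wants every summand measurable. *)
pose F i w : \bar R := if i \in L then ((c w i)%:R)%:E else 0%E.
have mF i : measurable_fun setT (F i).
  rewrite /F; case: (boolP (i \in L)) => [Li | _]; last exact: measurable_cst.
  by apply/measurable_EFinP; exact: mc.
have F_ge0 i w : setT w -> (0 <= F i w)%E.
  by rewrite /F; case: ifP; rewrite // lee_fin.
have sumF w : (\sum_(i <- L) F i w = (C w)%:E)%E.
  by rewrite /C -sumEFin big_seq [RHS]big_seq; apply: eq_bigr => i Li; rewrite /F Li.
have EC : (\int[P]_w (C w)%:E <= (N * m)%:E)%E.
  under eq_integral do rewrite -sumF.
  have -> : (N * m)%:E = (\sum_(i <- L) m%:E)%E.
    by rewrite sumEFin big_const_seq count_predT iter_addr_0 mulr_natl.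
  rewrite ge0_integral_sum // big_seq [leRHS]big_seq; apply: lee_sum => i Li.
  by rewrite /F Li; exact: Ec.
have mC : measurable_fun setT (fun w => (C w)%:E).
  by under eq_fun do rewrite -sumF; exact: emeasurable_sum.
have C_ge0 w : (0 <= (C w)%:E)%E by rewrite lee_fin; apply: sumr_ge0.
have := le_trans (probability_integral_ge P mC C_ge0 (fun w => C_ge w)) EC.
rewrite lee_fin -lerBrDl subrr ler_ndivrMr // mul0r subr_ge0.
by rewrite ler_pdivlMr.
Qed.

Section Entropy.
Variable R : realType.

Lemma KL_uniformE (q a : R) : 1 < q -> 0 < a < 1 ->
  KL (1 / q) a * ln 2 =
  ln q + a * ln a + (1 - a) * ln (1 - a) - (1 - a) * ln (q - 1).
Proof.
move=> q_gt1 /andP[a_gt0 a_lt1].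
have q_gt0 : 0 < q by lra.
have q1_gt0 : 0 < q - 1 by lra.
have a1_gt0 : 0 < 1 - a by lra.
rewrite /KL /log2.
have -> : a / (1 / q) = a * q by field; lra.
have -> : (1 - a) / (1 - 1 / q) = (1 - a) / ((q - 1) / q).
  by congr (_ / _); field; lra.
have ln2_gt0 : 0 < ln (2 : R) by apply: ln_gt0; lra.
rewrite lnM ?ln_div ?posrE ?divr_gt0 //.
by field; lra.
Qed.

Lemma one_sub_hq_log2 (q : nat) (a : R) : (2 <= q)%N -> 0 < a < 1 ->
  (1 - hq q (1 - a)) * log2 q%:R = KL (1 / q%:R) a.
Proof.
move=> q_ge2 a01; have q_gt1 : 1 < q%:R :> R by rewrite ltr1n.
have ln2_gt0 : 0 < ln (2 : R) by apply: ln_gt0; lra.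
have lnq_gt0 : 0 < ln (q%:R : R) by exact: ln_gt0.
apply: (mulIf (lt0r_neq0 ln2_gt0)); rewrite KL_uniformE //.
rewrite /hq /logb /log2 (_ : 1 - (1 - a) = a); last by ring.
by field; rewrite !gt_eqF.
Qed.

Lemma KL_uniform_le (q a : R) (n b : nat) : 1 < q -> 0 < a < 1 ->
  q ^+ n * expR (ln (a * (q - 1) / (1 - a)) * (a * n%:R))
    <= 2 ^+ b * ((q - 1) / (1 - a)) ^+ n ->
  KL (1 / q) a * n%:R <= b%:R.
Proof.
move=> q_gt1 a01; case/andP: (a01) => a_gt0 a_lt1.
have q_gt0 : 0 < q by lra.
have q1_gt0 : 0 < q - 1 by lra.
have a1_gt0 : 0 < 1 - a by lra.
have ln2_gt0 : 0 < ln (2 : R) by apply: ln_gt0; lra.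
have r_gt0 : 0 < (q - 1) / (1 - a) by exact: divr_gt0.
have aq1_gt0 : 0 < a * (q - 1) by exact: mulr_gt0.
rewrite -ler_ln ?posrE ?mulr_gt0 ?exprn_gt0 ?expR_gt0 //.
rewrite !lnM ?posrE ?exprn_gt0 ?expR_gt0 ?invr_gt0 //.
rewrite expRK lnV ?posrE // !lnXn // ln_div ?posrE //.
rewrite -(mulr_natr (ln q)) -(mulr_natr (ln 2)) -(mulr_natr (_ - _)) => ln_le.
rewrite -(ler_pM2r ln2_gt0) mulrAC KL_uniformE // (mulrC b%:R).
have -> : (ln q + a * ln a + (1 - a) * ln (1 - a) - (1 - a) * ln (q - 1)) * n%:R
    = ln q * n%:R + (ln a + ln (q - 1) - ln (1 - a)) * (a * n%:R)
      - (ln (q - 1) - ln (1 - a)) * n%:R by ring.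
by rewrite lerBlDr.
Qed.

End Entropy.

Theorem theorem10 (R : realType) (q : nat) (alpha : R) (n : nat)
  (d : measure_display) (T : measurableType d) (P : probability T R)
  (A : T -> detalg q) (b : nat) :
  (2 <= q)%N -> 0 < alpha -> alpha < 1 / q%:R ->
  (forall x : seq 'I_q, size x = n ->
     measurable_fun setT (fun w => (cost (A w) x)%:R : R)) ->
  (forall x : seq 'I_q, size x = n ->
     (\int[P]_w ((cost (A w) x)%:R)%:E <= (alpha * n%:R)%:E)%E) ->
  (forall w (x : seq 'I_q), size x = n -> reads_at_most (A w) x b) ->
  KL (1 / q%:R) alpha * n%:R <= b%:R /\
  KL (1 / q%:R) alpha * n%:R = (1 - hq q (1 - alpha)) * n%:R * log2 q%:R.
Proof.
move=> q_ge2 a_gt0 a_lt mcost Ecost readA.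
have q_gt1 : 1 < q%:R :> R by rewrite ltr1n.
have aq_lt1 : alpha * q%:R < 1 by rewrite -ltr_pdivlMr // (lt_trans ltr01).
have a01 : 0 < alpha < 1 by apply/andP; split => //; nra.
set th := alpha * (q%:R - 1) / (1 - alpha).
have th01 : 0 < th < 1.
  by apply/andP; split; rewrite /th ?ltr_pdivrMr ?divr_gt0 ?mulr_gt0; nra.
have th_shift : th + (q.-1)%:R = (q%:R - 1) / (1 - alpha).
  rewrite -subn1 natrB ?(ltnW q_ge2) // /th; field; lra.
have sum_le w : \sum_(x <- words 'I_q n) th ^+ cost (A w) x
    <= 2 ^+ b * ((q%:R - 1) / (1 - alpha)) ^+ n.
  rewrite -th_shift -natrX; apply: sum_expr_cost_le; [lra | exact: readA].
have mcost_n : {in words 'I_q n, forall x,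
    measurable_fun setT (fun w => (cost (A w) x)%:R : R)}.
  by move=> x; rewrite mem_words => /eqP; exact: mcost.
have Ecost_n : {in words 'I_q n, forall x,
    (\int[P]_w ((cost (A w) x)%:R)%:E <= (alpha * n%:R)%:E)%E}.
  by move=> x; rewrite mem_words => /eqP; exact: Ecost.
have := size_mul_expR_le th01 mcost_n Ecost_n sum_le.
rewrite size_words card_ord natrX => counting.
split; first exact: KL_uniform_le.
by rewrite mulrAC one_sub_hq_log2.
Qed.
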